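(* Let $\mathcal{T}$ be a finite forest of binary decision trees over $\mathbb{R}^d$, $b\ge 0$ an integer, and $\mathcal{D}$ a finite nonempty multiset of labelled instances $(\vec{x},y)\in\mathbb{R}^d\times\{-1,+1\}$. Then $$FLB(A_b,\mathcal{D})\ \le\ ELB(A_b,\mathcal{D})\ \le\ Acc_{A_b}(\mathcal{D}),$$ i.e., both quantities defined below are lower bounds on the accuracy of $\mathcal{T}$ under the attacker $A_b$.
   Context: Decision trees: a tree is either a leaf $\lambda(\hat y)$, $\hat y\in\{-1,+1\}$, or an internal node $\sigma(f,v,t_l,t_r)$ (feature $f$, threshold $v\in\mathbb{R}$, subtrees $t_l,t_r$); input $\vec{x}$ goes to $t_l$ if $x_f\le v$, else to $t_r$; $t(\vec{x})$ is the label of the leaf reached, and the traversal path of $\vec{x}$ in $t$ is the sequence of internal nodes visited. Forest prediction: $\mathcal{T}(\vec{x})=+1$ if $\sum_{t\in\mathcal{T}}t(\vec{x})>0$, else $-1$. Attacker: $A_b(\vec{x})=\{\vec{x}'\in\mathbb{R}^d:\|\vec{x}-\vec{x}'\|_0\le b\}$. Accuracy under attack: let $E=\{(\vec{x},y)\in\mathcal{D}: y\,\mathcal{T}(\vec{x})<0\}$, $E'=\{(\vec{x},y)\in\mathcal{D}\setminus E:\exists\vec{x}'\in A_b(\vec{x}),\ y\,\mathcal{T}(\vec{x}')<0\}$, and $Acc_{A_b}(\mathcal{D})=\frac{|\mathcal{D}|-|E\cup E'|}{|\mathcal{D}|}$. Covering sets: for $(\vec{x},y)\in\mathcal{D}$,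 let $\omega(\vec{x},y)=|\{t\in\mathcal{T}:t(\vec{x})\neq y\}|$. For each feature $f$, let $S_f^+$ (resp. $S_f^-$) be the set of trees $t\in\mathcal{T}$ with $t(\vec{x})=y$ whose traversal path of $\vec{x}$ contains a node $\sigma(f,v,\cdot,\cdot)$ with $x_f\le v$ true (resp. false). Call a collection $S'$ of these sets admissible if $|S'|\le b$ and for no $f$ does $S'$ contain both $S_f^+$ and $S_f^-$. FLB: $\overline{S_{FLB}}(\vec{x},y)=\max_{S' \text{ admissible}}\sum_{S_i\in S'}|S_i|$ (equivalently, the sum of sizes of the $b$ largest sets chosen greedily by size, never taking both $S_f^+$ and $S_f^-$ for the same $f$). ELB: $\overline{S_{ELB}}(\vec{x},y)=\max_{S'\text{ admissible}}\big|\bigcup_{S_i\in S'}S_i\big|$. For $X\in\{FLB,ELB\}$ let $E_X=\{(\vec{x},y)\in\mathcal{D}\setminus E:\ \omega(\vec{x},y)+\overline{S_X}(\vec{x},y)\ge|\mathcal{T}|/2\}$ and $X(A_b,\mathcal{D})=\frac{|\mathcal{D}|-|E\cup E_X|}{|\mathcal{D}|}$. *)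

From HB Require Import structures.
From mathcomp Require Import all_boot all_order all_algebra.
From mathcomp Require Import reals.
From Stdlib Require Import ClassicalEpsilon.
Set Implicit Arguments. Unset Strict Implicit. Unset Printing Implicit Defensive.
Import Order.TTheory GRing.Theory Num.Theory.
Local Open Scope ring_scope.

Definition pb (P : Prop) : bool :=
  if excluded_middle_informative P then true else false.

Definition lab (y : bool) : int := if y then 1 else -1.

Section Trees.
Variables (R : realType) (d : nat).

Definition input := 'I_d -> R.

Inductive tree :=
| Leaf of bool
| Node of 'I_d & R & tree & tree.

Fixpoint eval_tree (t : tree) (x : input) : bool :=
  match t with
  | Leaf y => y
  | Node f v tl tr => if x f <= v then eval_tree tl x else eval_tree tr x
  end.

Fixpoint path_has (t : tree) (x : input) (f : 'I_d) (s : bool) : bool :=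
  match t with
  | Leaf _ => false
  | Node g v tl tr =>
      ((g == f) && ((x g <= v) == s)) ||
      (if x g <= v then path_has tl x f s else path_has tr x f s)
  end.

(* A forest of n trees, indexed by 'I_n (so repeated trees count separately). *)
Variable n : nat.
Variable T : 'I_n -> tree.

Definition forest_pred (x : input) : bool :=
  (0 < \sum_(i < n) lab (eval_tree (T i) x))%R.

Definition misclassified (x : input) (y : bool) : bool :=
  (lab y * lab (forest_pred x) < 0)%R.

Definition l0dist (x x' : input) : nat := #|[set f : 'I_d | x f != x' f]|.

Definition in_attack (b : nat) (x x' : input) : Prop := (l0dist x x' <= b)%N.

Definition omega (x : input) (y : bool) : nat :=
  #|[set i : 'I_n | eval_tree (T i) x != y]|.

(* S_f^+ (s = true) and S_f^- (s = false). *)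
Definition Sset (x : input) (y : bool) (f : 'I_d) (s : bool) : {set 'I_n} :=
  [set i : 'I_n | (eval_tree (T i) x == y) && path_has (T i) x f s].

(* A collection S' of the sets S_f^{+/-} is encoded by c : 'I_d -> option bool,
   c f = Some true (resp. Some false) meaning S_f^+ (resp. S_f^-) is in S';
   this encoding forbids taking both S_f^+ and S_f^- for the same f. *)
Definition admissible (b : nat) (c : {ffun 'I_d -> option bool}) : bool :=
  (#|[set f : 'I_d | c f != None]| <= b)%N.

Definition chosen (c : {ffun 'I_d -> option bool}) (f : 'I_d) (s : bool) : bool :=
  c f == Some s.

Definition S_FLB (b : nat) (x : input) (y : bool) : nat :=
  \max_(c : {ffun 'I_d -> option bool} | admissible b c)
     \sum_(fs : 'I_d * bool | chosen c fs.1 fs.2) #|Sset x y fs.1 fs.2|.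

Definition S_ELB (b : nat) (x : input) (y : bool) : nat :=
  \max_(c : {ffun 'I_d -> option bool} | admissible b c)
     #|\bigcup_(fs : 'I_d * bool | chosen c fs.1 fs.2) Sset x y fs.1 fs.2|.

(* Datasets: finite multisets of labelled instances, as sequences. *)
Definition dataset := seq (input * bool).

Definition inE_ (p : input * bool) : bool := misclassified p.1 p.2.

Definition inE' (b : nat) (p : input * bool) : bool :=
  ~~ inE_ p && pb (exists x', in_attack b p.1 x' /\ misclassified x' p.2).

(* Acc_{A_b}(D) = (|D| - |E u E'|) / |D|, counting with multiplicity. *)
Definition acc_attack (b : nat) (D : dataset) : rat :=
  ((size D)%:R - (count (fun p => inE_ p || inE' b p) D)%:R) / (size D)%:R.

Definition inEX (SX : input -> bool -> nat) (p : input * bool) : bool :=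
  ~~ inE_ p && ((n%:R / 2 : rat) <= ((omega p.1 p.2 + SX p.1 p.2)%N)%:R).

Definition bound_X (SX : input -> bool -> nat) (D : dataset) : rat :=
  ((size D)%:R - (count (fun p => inE_ p || inEX SX p) D)%:R) / (size D)%:R.

Definition FLB (b : nat) (D : dataset) : rat := bound_X (S_FLB b) D.
Definition ELB (b : nat) (D : dataset) : rat := bound_X (S_ELB b) D.

End Trees.

From HB Require Import structures.
From mathcomp Require Import all_boot all_order all_algebra.
From mathcomp Require Import reals.
From Stdlib Require Import ClassicalEpsilon.
From mathcomp Require Import zify.
Set Implicit Arguments. Unset Strict Implicit. Unset Printing Implicit Defensive.
Import Order.TTheory GRing.Theory Num.Theory.
Local Open Scope ring_scope.

(* All three quantities have the form
   (|D| - #bad)/|D|, so each inequality reduces to an inclusion of "bad"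
   instances (lemma [bound_mono]).
   - FLB <= ELB: the union of an admissible collection is at most the sum of
     its sizes, hence S_ELB <= S_FLB pointwise, so E_ELB is contained in E_FLB.
   - ELB <= Acc: we show E' is contained in E_ELB.  If the attack x' in A_b(x)
     fools the forest, at least half the trees vote wrongly on x'
     ([flipped_majority]).  A tree wrong on x' is either wrong on x (counted by
     omega) or its paths on x and x' diverge at a node testing a perturbed
     feature f ([diverge]); it then lies in S_f^{sign}, where the sign records
     the direction of the perturbation.  The sets picked this way form an
     admissible collection ([attack_admissible]), so the wrong trees on x' are
     at most omega + S_ELB ([flipped_le_omega_ELB]). *)

Lemma sum_lab (n : nat) (e : 'I_n -> bool) :
  \sum_(i < n) lab (e i) = #|[set i | e i]|%:R - #|[set i | ~~ e i]|%:R.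
Proof.
rewrite (bigID (fun i => e i)) /=.
rewrite (eq_bigr (fun _ => 1)); last by move=> i ->.
rewrite [X in _ + X](eq_bigr (fun _ => -1)); last by move=> i /negbTE ->.
by rewrite !sumr_const mulNrn; congr (_%:R - _%:R); apply: eq_card => i; rewrite inE.
Qed.

Lemma card_split (n : nat) (e : 'I_n -> bool) :
  (#|[set i | e i]| + #|[set i | ~~ e i]|)%N = n.
Proof.
rewrite -cardsUI.
have -> : [set i | e i] :&: [set i | ~~ e i] = set0.
  by apply/setP=> i; rewrite !inE andbN.
by rewrite cards0 addn0 -[RHS]card_ord; apply: eq_card => i; rewrite !inE orbN.
Qed.

Lemma lab_mul_sum (n : nat) (e : 'I_n -> bool) (y : bool) :
  lab y * \sum_(i < n) lab (e i) =
  #|[set i | e i == y]|%:R - #|[set i | ~~ (e i == y)]|%:R.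
Proof.
rewrite -sum_lab mulr_sumr; apply: eq_bigr => i _.
by case: y; case: (e i); rewrite /lab ?mul1r ?mulN1r ?opprK.
Qed.

Lemma majority_wrong (n : nat) (e : 'I_n -> bool) (y : bool) :
  lab y * lab (0 < \sum_(i < n) lab (e i)) < 0 ->
  (n <= 2 * #|[set i | e i != y]|)%N.
Proof.
move=> wrong.
have le0 : lab y * \sum_(i < n) lab (e i) <= 0.
  move: wrong; set s := \sum_(i < n) _.
  by case: y; case: (ltrP 0 s) => hs; rewrite /lab ?mul1r ?mulN1r ?oppr_le0 // => _; exact: ltW.
move: le0; rewrite lab_mul_sum subr_le0 ler_nat.
have := card_split (fun i => e i == y).
lia.
Qed.

(* If the paths of x and x' in t reach different leaves, they split at a node
   on the path of x testing a feature f with x_f <> x'_f; the outcome of that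
   test on x is x_f <= v, which holds exactly when x_f < x'_f. *)
Lemma diverge (R : realType) (d : nat) (t : tree R d) (x x' : input R d) :
  eval_tree t x != eval_tree t x' ->
  exists f, (x f != x' f) && path_has t x f (x f < x' f).
Proof.
elim: t => [y|g v tl IHl tr IHr] /=; first by rewrite eqxx.
case hx: (x g <= v); case hx': (x' g <= v) => neq.
- by have [f /andP [moved on_path]] := IHl neq; exists f; rewrite moved on_path orbT.
- have lt_g : x g < x' g by apply: le_lt_trans hx _; rewrite ltNge hx'.
  by exists g; rewrite (lt_eqF lt_g) eqxx lt_g.
- have lt_g : x' g < x g by apply: le_lt_trans hx' _; rewrite ltNge hx.
  by exists g; rewrite (gt_eqF lt_g) eqxx ltNge (ltW lt_g).
- by have [f /andP [moved on_path]] := IHr neq; exists f; rewrite moved on_path orbT.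
Qed.

Lemma card_bigcup_le (I T : finType) (P : pred I) (S : I -> {set T}) :
  (#|\bigcup_(j | P j) S j| <= \sum_(j | P j) #|S j|)%N.
Proof.
elim/big_rec2: _ => [|j A m _ IH]; first by rewrite cards0.
by apply: leq_trans (leq_card_setU _ _).1 _; rewrite leq_add2l.
Qed.

Lemma bound_mono (s c1 c2 : nat) : (c1 <= c2)%N -> (0 < s)%N ->
  ((s%:R - c2%:R) / s%:R : rat) <= (s%:R - c1%:R) / s%:R.
Proof.
by move=> le_c s_gt0; rewrite ler_pM2r ?invr_gt0 ?ltr0n // lerD2l lerN2 ler_nat.
Qed.

Section Forest.
Variables (R : realType) (d n : nat) (T : 'I_n -> tree R d).

Lemma S_ELB_le_S_FLB (b : nat) (x : input R d) (y : bool) :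
  (S_ELB T b x y <= S_FLB T b x y)%N.
Proof.
apply/bigmax_leqP => c adm_c; apply: leq_trans (leq_bigmax_cond c adm_c).
exact: card_bigcup_le.
Qed.

Lemma inEX_mono (S1 S2 : input R d -> bool -> nat) (p : input R d * bool) :
  (forall x y, S1 x y <= S2 x y)%N -> inEX T S1 p -> inEX T S2 p.
Proof.
move=> le_S /andP [correct le1]; rewrite /inEX correct /=.
by apply: le_trans le1 _; rewrite ler_nat leq_add2l.
Qed.

Lemma flipped_majority (x' : input R d) (y : bool) :
  misclassified T x' y ->
  (n%:R / 2 : rat) <= #|[set i | eval_tree (T i) x' != y]|%:R.
Proof.
move/majority_wrong; rewrite ler_pdivrMr // -natrM ler_nat.
by rewrite mulnC.
Qed.

Definition attack_collection (x x' : input R d) : {ffun 'I_d -> option bool} :=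
  [ffun f => if x f != x' f then Some (x f < x' f) else None].

Lemma attack_admissible (b : nat) (x x' : input R d) :
  in_attack b x x' -> admissible b (attack_collection x x').
Proof.
move=> att; apply: leq_trans att; apply: eq_leq; apply: eq_card => f.
by rewrite !inE ffunE; case: (x f != x' f).
Qed.

Lemma flipped_covered (x x' : input R d) (y : bool) :
  [set i | eval_tree (T i) x' != y] \subset
  [set i | eval_tree (T i) x != y] :|:
  \bigcup_(fs : 'I_d * bool | chosen (attack_collection x x') fs.1 fs.2)
     Sset T x y fs.1 fs.2.
Proof.
apply/subsetP => i; rewrite !inE => wrong'.
case: eqP => [right|] //=.
have [f /andP [moved on_path]] : exists f,
    (x f != x' f) && path_has (T i) x f (x f < x' f).
  by apply: diverge; rewrite right eq_sym.
apply/bigcupP; exists (f, x f < x' f); first by rewrite /chosen ffunE moved.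
by rewrite inE right eqxx on_path.
Qed.

Lemma flipped_le_omega_ELB (b : nat) (x x' : input R d) (y : bool) :
  in_attack b x x' ->
  (#|[set i | eval_tree (T i) x' != y]| <= omega T x y + S_ELB T b x y)%N.
Proof.
move=> att; apply: leq_trans (subset_leq_card (flipped_covered x x' y)) _.
apply: leq_trans (leq_card_setU _ _).1 _; rewrite leq_add2l.
exact: (leq_bigmax_cond _ (attack_admissible att)).
Qed.

Lemma inE'_inEX_ELB (b : nat) (p : input R d * bool) :
  inE' T b p -> inEX T (S_ELB T b) p.
Proof.
case: p => x y /andP [correct]; rewrite /pb.
case: excluded_middle_informative => // -[x' [att fooled]] _.
rewrite /inEX correct /=; apply: le_trans (flipped_majority fooled) _.
by rewrite ler_nat flipped_le_omega_ELB.
Qed.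

End Forest.

Theorem mainTheorem4 (R : realType) (d n : nat) (T : 'I_n -> tree R d)
  (b : nat) (D : dataset R d) (HD : (0 < size D)%N) :
  FLB T b D <= ELB T b D /\ ELB T b D <= acc_attack T b D.
Proof.
split; apply: bound_mono => //; apply: sub_count => p /orP [-> //| bad_p].
- by rewrite (inEX_mono (S_ELB_le_S_FLB T b) bad_p) orbT.
- by rewrite (inE'_inEX_ELB bad_p) orbT.
Qed.
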